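(* Let $\mathsf{L}$ be an intermediate logic with $\mathsf{ND}\subseteq\mathsf{L}$. Then its negative variant $\mathsf{L}^\neg$ is $\mathcal{ST}$-hereditarily structurally complete, where $\mathcal{ST}$ is the class of all substitutions stable in $\mathsf{L}^\neg$. In particular, $\mathsf{ND}^\neg$, $\mathsf{KP}^\neg$ and $\mathsf{ML}^\neg$ are $\mathcal{ST}$-hereditarily structurally complete.
   Context: Formulas are those of intuitionistic propositional logic, built from propositional variables, $\bot,\top$ with $\wedge,\vee,\to$; $\neg\phi:=\phi\to\bot$. An intermediate theory is a set $\mathsf{T}$ of formulas closed under modus ponens with $\mathsf{IPC}\subseteq\mathsf{T}\subseteq\mathsf{CPC}$; an intermediate logic is an intermediate theory closed under uniform substitution. For an intermediate theory $\mathsf{T}$, $\Gamma\vdash_{\mathsf T}\phi$ means $\phi$ is derivable from $\Gamma\cup\mathsf{T}$ by modus ponens, and $\vdash_{\mathsf T}\phi$ means $\phi\in\mathsf T$. A substitution is a map on formulas commuting with connectives and constants. $\mathsf{ND}$ (Maksimova's logic) is the intermediate logic axiomatized over $\mathsf{IPC}$ by all substitution instances of $(\neg p\to\bigvee_{i=1}^k\neg q_i)\to\bigvee_{i=1}^k(\neg p\to\neg q_i)$, $k\ge1$; $\mathsf{KP}$ is Kreisel–Putnam logic and $\mathsf{ML}$ is Medvedev's logic (both extend $\mathsf{ND}$). For an intermediate logic $\mathsf{L}$, $\phi^\neg$ is the result of replacing each propositional variable $p$ in $\phi$ by $\neg p$, and $\mathsf{L}^\neg=\{\phi\mid\phi^\neg\in\mathsf{L}\}$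 (an intermediate theory). A substitution $\sigma$ is stable in $\mathsf{L}^\neg$ if $\vdash_{\mathsf{L}^\neg}\sigma(p)\leftrightarrow\neg\neg\sigma(p)$ for every propositional variable $p$. For an intermediate theory $\mathsf T$ and a set $\mathcal S$ of substitutions under which $\vdash_{\mathsf T}$ is closed (i.e. $\phi\vdash_{\mathsf T}\psi$ implies $\sigma(\phi)\vdash_{\mathsf T}\sigma(\psi)$ for $\sigma\in\mathcal S$), $\mathsf T$ is $\mathcal S$-structurally complete if for all formulas $\phi,\psi$: whenever $\vdash_{\mathsf T}\sigma(\phi)$ implies $\vdash_{\mathsf T}\sigma(\psi)$ for all $\sigma\in\mathcal S$, then $\phi\vdash_{\mathsf T}\psi$. $\mathsf T$ is $\mathcal S$-hereditarily structurally complete if every intermediate theory $\mathsf T'\supseteq\mathsf T$ such that $\vdash_{\mathsf T'}$ is closed under all $\sigma\in\mathcal S$ is $\mathcal S$-structurally complete. *)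

From mathcomp Require Import all_boot.
Set Implicit Arguments. Unset Strict Implicit. Unset Printing Implicit Defensive.

Inductive form : Type :=
| Var : nat -> form
| Bot : form
| Top : form
| And : form -> form -> form
| Or  : form -> form -> form
| Imp : form -> form -> form.

Definition Neg (a : form) : form := Imp a Bot.
Definition Iff (a b : form) : form := And (Imp a b) (Imp b a).

Definition fset := form -> Prop.

Definition substitution := nat -> form.
Fixpoint subst (s : substitution) (f : form) : form :=
  match f with
  | Var n => s n
  | Bot => Bot
  | Top => Top
  | And a b => And (subst s a) (subst s b)
  | Or a b => Or (subst s a) (subst s b)
  | Imp a b => Imp (subst s a) (subst s b)
  end.

Inductive IPC : fset :=
| ipc_k a b : IPC (Imp a (Imp b a))
| ipc_s a b c : IPC (Imp (Imp a (Imp b c)) (Imp (Imp a b) (Imp a c)))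
| ipc_and1 a b : IPC (Imp (And a b) a)
| ipc_and2 a b : IPC (Imp (And a b) b)
| ipc_andI a b : IPC (Imp a (Imp b (And a b)))
| ipc_or1 a b : IPC (Imp a (Or a b))
| ipc_or2 a b : IPC (Imp b (Or a b))
| ipc_orE a b c : IPC (Imp (Imp a c) (Imp (Imp b c) (Imp (Or a b) c)))
| ipc_efq a : IPC (Imp Bot a)
| ipc_top : IPC Top
| ipc_mp a b : IPC (Imp a b) -> IPC a -> IPC b.

Fixpoint beval (v : nat -> bool) (f : form) : bool :=
  match f with
  | Var n => v n
  | Bot => false
  | Top => true
  | And a b => beval v a && beval v b
  | Or a b => beval v a || beval v b
  | Imp a b => beval v a ==> beval v b
  end.
Definition CPC : fset := fun f => forall v, beval v f = true.

Definition intermediate_theory (T : fset) : Prop :=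
  [/\ (forall a b, T (Imp a b) -> T a -> T b),
      (forall f, IPC f -> T f) &
      (forall f, T f -> CPC f)].

Definition intermediate_logic (L : fset) : Prop :=
  intermediate_theory L /\ (forall s f, L f -> L (subst s f)).

Inductive derives (T Gamma : fset) : form -> Prop :=
| der_hyp f : Gamma f -> derives T Gamma f
| der_thm f : T f -> derives T Gamma f
| der_mp a b : derives T Gamma (Imp a b) -> derives T Gamma a -> derives T Gamma b.

Definition single (f : form) : fset := fun g => g = f.

Inductive axiomatized (Ax : fset) : fset :=
| ax_ipc f : IPC f -> axiomatized Ax f
| ax_inst s f : Ax f -> axiomatized Ax (subst s f)
| ax_mp a b : axiomatized Ax (Imp a b) -> axiomatized Ax a -> axiomatized Ax b.

Fixpoint bigOr (x : form) (l : list form) : form :=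
  match l with
  | nil => x
  | y :: l' => Or x (bigOr y l')
  end.

(* ND_k, k >= 1: (¬p -> ¬q_1 ∨ ... ∨ ¬q_k) -> (¬p -> ¬q_1) ∨ ... ∨ (¬p -> ¬q_k),
   with p = Var 0 and q_i = Var i *)
Definition ND_axiom (k : nat) : form :=
  let p := Var 0 in
  let qs := [seq Var i.+1 | i <- iota 1 k.-1] in
  Imp (Imp (Neg p) (bigOr (Neg (Var 1)) [seq Neg q | q <- qs]))
      (bigOr (Imp (Neg p) (Neg (Var 1))) [seq Imp (Neg p) (Neg q) | q <- qs]).

Definition ND_axioms : fset := fun f => exists k, 1 <= k /\ f = ND_axiom k.
Definition ND : fset := axiomatized ND_axioms.

Definition KP_axiom : form :=
  Imp (Imp (Neg (Var 0)) (Or (Var 1) (Var 2)))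
      (Or (Imp (Neg (Var 0)) (Var 1)) (Imp (Neg (Var 0)) (Var 2))).
Definition KP : fset := axiomatized (single KP_axiom).

(* Medvedev's logic: formulas valid on all Medvedev frames, i.e. the posets of
   nonempty subsets of a finite set 'I_n ordered by reverse inclusion,
   under intuitionistic Kripke semantics with persistent valuations. *)
Fixpoint mforces (n : nat) (V : nat -> {set 'I_n} -> Prop) (x : {set 'I_n})
    (f : form) : Prop :=
  match f with
  | Var k => V k x
  | Bot => False
  | Top => True
  | And a b => mforces V x a /\ mforces V x b
  | Or a b => mforces V x a \/ mforces V x b
  | Imp a b => forall y : {set 'I_n}, y != set0 -> y \subset x ->
                 mforces V y a -> mforces V y b
  end.

Definition persistent (n : nat) (V : nat -> {set 'I_n} -> Prop) : Prop :=
  forall k (x y : {set 'I_n}), x != set0 -> y != set0 -> y \subset x ->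
    V k x -> V k y.

Definition ML : fset := fun f =>
  forall (n : nat) (V : nat -> {set 'I_n} -> Prop), persistent V ->
    forall x : {set 'I_n}, x != set0 -> mforces V x f.

Definition neg_sub : substitution := fun p => Neg (Var p).
Definition neg_variant (L : fset) : fset := fun f => L (subst neg_sub f).

Definition stable_in (T : fset) (s : substitution) : Prop :=
  forall p, T (Iff (s p) (Neg (Neg (s p)))).

Definition subst_class := substitution -> Prop.

Definition closed_under (T : fset) (S : subst_class) : Prop :=
  forall s, S s -> forall a b,
    derives T (single a) b -> derives T (single (subst s a)) (subst s b).

Definition structurally_complete (T : fset) (S : subst_class) : Prop :=
  forall a b, (forall s, S s -> T (subst s a) -> T (subst s b)) ->
    derives T (single a) b.

Definition hereditarily_structurally_complete (T : fset) (S : subst_class) : Prop :=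
  forall T' : fset, intermediate_theory T' -> (forall f, T f -> T' f) ->
    closed_under T' S -> structurally_complete T' S.

(* In an extension T of L^¬ all atoms, hence all or-free formulas, are ¬¬-stable,
   and an or-free classical tautology is provable (Kalmár's argument). Since L^¬
   contains the ND axioms for negated arguments, which distribute implications
   between ¬¬-stable formulas over disjunctions, every formula is T-equivalent to
   a disjunction of or-free formulas. So to derive [a -> b] from the admissibility
   of [a / b] under stable substitutions it suffices to derive [g -> b] for each
   or-free disjunct [g] of [a]. If [g] is classically unsatisfiable, [¬g] is
   provable. Otherwise pick a valuation [e] satisfying [g]: Prucnal's substitution
   [σ] for [g] and [e] is stable and [σ g] is a classical tautology, so [σ a] and
   then [σ b] are provable, while [g] proves [σ b -> b]. Finally KP and ML contain
   ND. *)

From mathcomp Require Import all_boot.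
From Stdlib Require Import ClassicalEpsilon.
Require Stdlib.Lists.List.
Set Implicit Arguments. Unset Strict Implicit. Unset Printing Implicit Defensive.

Notation In := List.In.

Lemma In_map A B (f : A -> B) s x : In x s -> In (f x) (map f s).
Proof. by elim: s => //= y s IH [->|/IH]; auto. Qed.

Lemma In_map_inv A B (f : A -> B) s y : In y (map f s) -> exists2 x, In x s & y = f x.
Proof.
elim: s => //= x s IH [<-|/IH [z Hz ->]]; first by exists x; auto.
by exists z; auto.
Qed.
Arguments In_map_inv {A B f s y}.

Lemma In_cat A (s1 s2 : seq A) x : In x (s1 ++ s2) <-> In x s1 \/ In x s2.
Proof. by elim: s1 => [|y s1 IH] /=; [tauto | rewrite IH; tauto]. Qed.

Lemma In_allpairs A B C (f : A -> B -> C) s t z :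
  In z [seq f x y | x <- s, y <- t] <-> exists x y, [/\ In x s, In y t & z = f x y].
Proof.
elim: s => [|x s IH] /=; first by split=> // [[x [y []]]].
rewrite In_cat IH; split.
- case=> [/In_map_inv [y Hy ->]|[x' [y [Hx Hy ->]]]]; first by exists x, y; split; auto.
  by exists x', y; split; auto.
- case=> x' [y [[<-|Hx] Hy ->]]; first by left; apply: In_map.
  by right; exists x', y.
Qed.

Definition ipc_theory (T : fset) : Prop :=
  (forall f, IPC f -> T f) /\ (forall a b, T (Imp a b) -> T a -> T b).

Lemma ipc_theory_IPC : ipc_theory IPC.
Proof. by split=> //; apply: ipc_mp. Qed.

Lemma intermediate_ipc_theory T : intermediate_theory T -> ipc_theory T.
Proof. by case. Qed.

Fixpoint imps (G : seq form) (f : form) : form :=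
  if G is g :: G' then imps G' (Imp g f) else f.

Lemma ipc_id a : IPC (Imp a a).
Proof. exact: ipc_mp (ipc_mp (ipc_s a (Imp a a) a) (ipc_k a (Imp a a))) (ipc_k a a). Qed.

Lemma ipc_comp a b c : IPC (Imp a b) -> IPC (Imp b c) -> IPC (Imp a c).
Proof.
move=> Hab Hbc.
exact: ipc_mp (ipc_mp (ipc_s a b c) (ipc_mp (ipc_k (Imp b c) a) Hbc)) Hab.
Qed.

Lemma ipc_imps_weaken G a : IPC (Imp a (imps G a)).
Proof.
elim: G a => [|g G IH] a /=; first exact: ipc_id.
exact: ipc_comp (ipc_k a g) (IH (Imp g a)).
Qed.

Lemma ipc_imps_mp G a b : IPC (Imp (imps G (Imp a b)) (Imp (imps G a) (imps G b))).
Proof.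
elim: G a b => [|g G IH] a b /=; first exact: ipc_id.
have Hs := ipc_mp (IH _ _) (ipc_mp (ipc_imps_weaken G _) (ipc_s g a b)).
exact: ipc_comp Hs (IH _ _).
Qed.

Section IpcTheory.

Variable T : fset.
Hypothesis hT : ipc_theory T.

Lemma imps_mp G a b : T (imps G (Imp a b)) -> T (imps G a) -> T (imps G b).
Proof.
case: hT => HI Hmp Hab Ha.
exact: Hmp (Hmp _ _ (HI _ (ipc_imps_mp G a b)) Hab) Ha.
Qed.

Lemma imps_weaken G a : T a -> T (imps G a).
Proof. by case: hT => HI Hmp; apply: Hmp; apply: HI; apply: ipc_imps_weaken. Qed.

Lemma imps_ipc G a : IPC a -> T (imps G a).
Proof. by case: hT => HI _ /HI; apply: imps_weaken. Qed.

End IpcTheory.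

Lemma ipc_imps_hyp G f : In f G -> IPC (imps G f).
Proof.
have hI := ipc_theory_IPC.
elim: G => [|g G IH] //= [->|Hf]; first exact (imps_ipc hI G (ipc_id f)).
exact (imps_mp hI (imps_ipc hI G (ipc_k f g)) (IH Hf)).
Qed.

(** * Natural deduction over a theory *)

Inductive ded (T : fset) : seq form -> form -> Prop :=
| ded_hyp G f : In f G -> ded T G f
| ded_thm G f : T f -> ded T G f
| ded_impI G a b : ded T (a :: G) b -> ded T G (Imp a b)
| ded_impE G a b : ded T G (Imp a b) -> ded T G a -> ded T G b
| ded_andI G a b : ded T G a -> ded T G b -> ded T G (And a b)
| ded_andE1 G a b : ded T G (And a b) -> ded T G a
| ded_andE2 G a b : ded T G (And a b) -> ded T G b
| ded_orI1 G a b : ded T G a -> ded T G (Or a b)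
| ded_orI2 G a b : ded T G b -> ded T G (Or a b)
| ded_orE G a b c : ded T G (Or a b) -> ded T (a :: G) c -> ded T (b :: G) c -> ded T G c
| ded_botE G a : ded T G Bot -> ded T G a
| ded_topI G : ded T G Top.
Arguments ded_hyp {T G f}.
Arguments ded_thm {T G f}.
Arguments ded_topI {T G}.

Ltac hyp := apply: ded_hyp; simpl; auto 10.
Ltac impE_with X := apply: (ded_impE (a := X)).

Lemma ded_sound T G f : ipc_theory T -> ded T G f -> T (imps G f).
Proof.
move=> hT; have [HI _] := hT.
have rule G' a b : IPC (Imp a b) -> T (imps G' a) -> T (imps G' b).
  by move=> Hab; apply: imps_mp => //; apply: imps_ipc.
elim=> {G f} G'.
- by move=> f /ipc_imps_hyp /HI.
- exact: imps_weaken.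
- by [].
- by move=> a b _ Hab _; apply: imps_mp.
- move=> a b _ Ha _; apply: imps_mp => //.
  by apply: rule Ha; apply: ipc_andI.
- by move=> a b _; apply: rule; apply: ipc_and1.
- by move=> a b _; apply: rule; apply: ipc_and2.
- by move=> a b _; apply: rule; apply: ipc_or1.
- by move=> a b _; apply: rule; apply: ipc_or2.
- move=> a b c _ Hab _ /= Hac _ /= Hbc; apply: imps_mp Hab => //.
  by apply: imps_mp Hbc => //; apply: rule Hac; apply: ipc_orE.
- by move=> a _; apply: rule; apply: ipc_efq.
- exact (imps_ipc hT G' ipc_top).
Qed.

Lemma ded_sound_nil T f : ipc_theory T -> ded T [::] f -> T f.
Proof. exact: ded_sound. Qed.

Lemma ded_weaken T G f : ded T G f -> forall D, (forall g, In g G -> In g D) -> ded T D f.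
Proof.
have cons_sub (a : form) G1 G2 :
    (forall g, In g G1 -> In g G2) -> forall g, In g (a :: G1) -> In g (a :: G2).
  by move=> HGD g /= [->|/HGD]; auto.
elim=> {G f} G'.
- by move=> f Hf D /(_ f Hf); apply: ded_hyp.
- by move=> f Hf D _; apply: ded_thm.
- by move=> a b _ IH D /(cons_sub a) /IH; apply: ded_impI.
- by move=> a b _ IH1 _ IH2 D HD; apply: ded_impE (IH1 D HD) (IH2 D HD).
- by move=> a b _ IH1 _ IH2 D HD; apply: ded_andI (IH1 D HD) (IH2 D HD).
- by move=> a b _ IH D /IH; apply: ded_andE1.
- by move=> a b _ IH D /IH; apply: ded_andE2.
- by move=> a b _ IH D /IH; apply: ded_orI1.
- by move=> a b _ IH D /IH; apply: ded_orI2.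
- move=> a b c _ IH _ IHa _ IHb D HD.
  exact: ded_orE (IH D HD) (IHa _ (cons_sub a _ _ HD)) (IHb _ (cons_sub b _ _ HD)).
- by move=> a _ IH D /IH; apply: ded_botE.
- by move=> D _; apply: ded_topI.
Qed.

Lemma ded_weaken1 T G h f : ded T G f -> ded T (h :: G) f.
Proof. by move=> Hf; apply: (ded_weaken Hf) => g /=; auto. Qed.

Lemma ded_cut T G a b : ded T G a -> ded T (a :: G) b -> ded T G b.
Proof. by move=> Ha Hb; apply: ded_impE (ded_impI Hb) Ha. Qed.

Lemma ded_bigOrI T G h l z : In z (h :: l) -> ded T G z -> ded T G (bigOr h l).
Proof.
elim: l h => [|y l IH] h /=; first by case=> // <-.
by case=> [<-|Hz Hd]; [apply: ded_orI1 | apply: ded_orI2; apply: IH Hz Hd].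
Qed.

Lemma ded_bigOrE T G h l c : ded T G (bigOr h l) ->
  (forall z, In z (h :: l) -> ded T (z :: G) c) -> ded T G c.
Proof.
elim: l h G => [|y l IH] h G /= Hl Hc; first by apply: ded_cut Hl (Hc _ _); left.
apply: ded_orE Hl _ _; first by apply: Hc; left.
apply: IH => [|z Hz]; first by hyp.
by apply: (ded_weaken (Hc z _)) => [|g /=]; tauto.
Qed.

Definition dis (l : seq form) : form := foldr Or Bot l.

Lemma ded_disI T G l z : In z l -> ded T G z -> ded T G (dis l).
Proof.
elim: l => [|y l IH] //= [<-|Hz Hd]; first exact: ded_orI1.
by apply: ded_orI2; apply: IH Hz Hd.
Qed.

Lemma ded_disE T G l c : ded T G (dis l) ->
  (forall z, In z l -> ded T (z :: G) c) -> ded T G c.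
Proof.
elim: l G => [|y l IH] G /= Hl Hc; first exact: ded_botE.
apply: ded_orE Hl _ _; first by apply: Hc; left.
apply: IH => [|z Hz]; first by hyp.
by apply: (ded_weaken (Hc z _)) => [|g /=]; tauto.
Qed.

Lemma ded_imp_And T G a a' b b' : ded T G (Imp a a') -> ded T G (Imp b b') ->
  ded T G (Imp (And a b) (And a' b')).
Proof.
move=> Ha Hb; apply: ded_impI; apply: ded_andI.
  by impE_with a; [apply: ded_weaken1 | apply: ded_andE1; hyp].
by impE_with b; [apply: ded_weaken1 | apply: ded_andE2; hyp].
Qed.

Lemma ded_imp_Or T G a a' b b' : ded T G (Imp a a') -> ded T G (Imp b b') ->
  ded T G (Imp (Or a b) (Or a' b')).
Proof.
move=> Ha Hb; apply: ded_impI; apply: ded_orE; first by hyp.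
  by apply: ded_orI1; impE_with a; [do 2 apply: ded_weaken1 | hyp].
by apply: ded_orI2; impE_with b; [do 2 apply: ded_weaken1 | hyp].
Qed.

Lemma ded_imp_Imp T G a a' b b' : ded T G (Imp a' a) -> ded T G (Imp b b') ->
  ded T G (Imp (Imp a b) (Imp a' b')).
Proof.
move=> Ha Hb; apply: ded_impI; apply: ded_impI.
impE_with b; first by do 2 apply: ded_weaken1.
impE_with a; first hyp.
by impE_with a'; [do 2 apply: ded_weaken1 | hyp].
Qed.

Lemma ded_subst_equiv T G s :
  (forall p, ded T G (Imp (s p) (Var p))) -> (forall p, ded T G (Imp (Var p) (s p))) ->
  forall f, ded T G (Imp (subst s f) f) /\ ded T G (Imp f (subst s f)).
Proof.
move=> Hs1 Hs2.
elim=> [p|||a [Ha1 Ha2] b [Hb1 Hb2]|a [Ha1 Ha2] b [Hb1 Hb2]|a [Ha1 Ha2] b [Hb1 Hb2]] /=.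
- by [].
- by split; apply: ded_impI; hyp.
- by split; apply: ded_impI; hyp.
- by split; apply: ded_imp_And.
- by split; apply: ded_imp_Or.
- by split; apply: ded_imp_Imp.
Qed.

(** * Or-free formulas *)

Fixpoint or_free (f : form) : Prop :=
  match f with
  | Or _ _ => False
  | And a b | Imp a b => or_free a /\ or_free b
  | _ => True
  end.

Lemma or_free_subst s f : (forall p, or_free (s p)) -> or_free f -> or_free (subst s f).
Proof. by move=> Hs; elim: f => //= [a IHa b IHb|a IHa b IHb] [/IHa ? /IHb ?]. Qed.

Fixpoint vars (f : form) : seq nat :=
  match f with
  | Var p => [:: p]
  | And a b | Or a b | Imp a b => vars a ++ vars b
  | _ => [::]
  end.

Definition stable_atoms (T : fset) : Prop :=
  forall p, T (Iff (Var p) (Neg (Neg (Var p)))).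

Definition dne_stable (T : fset) (b : form) : Prop :=
  forall G, ded T G (Imp (Neg (Neg b)) b).

Lemma dne_stable_Bot T : dne_stable T Bot.
Proof. by move=> G; apply: ded_impI; impE_with (Neg Bot); [hyp | apply: ded_impI; hyp]. Qed.

Lemma dne_stable_Top T : dne_stable T Top.
Proof. by move=> G; apply: ded_impI; apply: ded_topI. Qed.

Lemma dne_stable_And T a b : dne_stable T a -> dne_stable T b -> dne_stable T (And a b).
Proof.
move=> Ha Hb G; apply: ded_impI; apply: ded_andI.
  impE_with (Neg (Neg a)); first exact: Ha.
  apply: ded_impI; impE_with (Neg (And a b)); first hyp.
  by apply: ded_impI; impE_with a; [hyp | apply: ded_andE1; hyp].
impE_with (Neg (Neg b)); first exact: Hb.
apply: ded_impI; impE_with (Neg (And a b)); first hyp.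
by apply: ded_impI; impE_with b; [hyp | apply: ded_andE2; hyp].
Qed.

Lemma dne_stable_Imp T a b : dne_stable T b -> dne_stable T (Imp a b).
Proof.
move=> Hb G; apply: ded_impI; apply: ded_impI.
impE_with (Neg (Neg b)); first exact: Hb.
apply: ded_impI; impE_with (Neg (Imp a b)); first hyp.
by apply: ded_impI; impE_with b; [hyp | impE_with a; hyp].
Qed.

Lemma ded_iff_dne T G b : dne_stable T b -> ded T G (Iff b (Neg (Neg b))).
Proof.
move=> Hb; apply: ded_andI; last exact: Hb.
by apply: ded_impI; apply: ded_impI; impE_with b; hyp.
Qed.

Lemma or_free_dne_stable T h : stable_atoms T -> or_free h -> dne_stable T h.
Proof.
move=> HT; elim: h => [p|||a IHa b IHb|a IHa b IHb|a IHa b IHb] //= Hh.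
- move=> G; apply: (ded_andE2 (a := Imp (Var p) (Neg (Neg (Var p))))).
  by apply: ded_thm; apply: HT.
- exact: dne_stable_Bot.
- exact: dne_stable_Top.
- by case: Hh => /IHa Ha /IHb Hb; apply: dne_stable_And.
- by case: Hh => _ /IHb; apply: dne_stable_Imp.
Qed.

Definition lit (v : nat -> bool) (p : nat) : form := if v p then Var p else Neg (Var p).

Definition lits (v : nat -> bool) (ps : seq nat) (G : seq form) : seq form :=
  [seq lit v p | p <- ps] ++ G.

Lemma lit_in_lits v ps G p : p \in ps -> In (lit v p) (lits v ps G).
Proof. by elim: ps => [|q ps IH] //=; rewrite inE => /orP[/eqP->|/IH]; auto. Qed.

Lemma eq_lits v w ps G : {in ps, v =1 w} -> lits v ps G = lits w ps G.
Proof. by move=> Hvw; congr (_ ++ _); apply/eq_in_map => p /Hvw; rewrite /lit => ->. Qed.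

Lemma ded_kalmar T v h G : or_free h -> {in vars h, forall p, In (lit v p) G} ->
  ded T G (if beval v h then h else Neg h).
Proof.
elim: h G => [p|||a IHa b IHb|a IHa b IHb|a IHa b IHb] G //= Hh HG.
- by apply: ded_hyp; apply: HG; rewrite inE.
- by apply: ded_impI; hyp.
- exact: ded_topI.
- case: Hh => Ha Hb.
  have [HGa HGb] : {in vars a, forall p, In (lit v p) G} /\ {in vars b, forall p, In (lit v p) G}.
    by split=> p Hp; apply: HG; rewrite mem_cat Hp ?orbT.
  move: (IHa G Ha HGa) (IHb G Hb HGb).
  case: (beval v a); case: (beval v b) => /= Ha' Hb'.
  + exact: ded_andI.
  + by apply: ded_impI; impE_with b; [apply: ded_weaken1 | apply: ded_andE2; hyp].
  + by apply: ded_impI; impE_with a; [apply: ded_weaken1 | apply: ded_andE1; hyp].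
  + by apply: ded_impI; impE_with a; [apply: ded_weaken1 | apply: ded_andE1; hyp].
- case: Hh => Ha Hb.
  have [HGa HGb] : {in vars a, forall p, In (lit v p) G} /\ {in vars b, forall p, In (lit v p) G}.
    by split=> p Hp; apply: HG; rewrite mem_cat Hp ?orbT.
  move: (IHa G Ha HGa) (IHb G Hb HGb).
  case: (beval v a); case: (beval v b) => /= Ha' Hb'.
  + by apply: ded_impI; apply: ded_weaken1.
  + apply: ded_impI; impE_with b; first exact: ded_weaken1.
    by impE_with a; [hyp | apply: ded_weaken1].
  + by apply: ded_impI; apply: ded_weaken1.
  + apply: ded_impI; apply: ded_botE.
    by impE_with a; [apply: ded_weaken1 | hyp].
Qed.

Lemma ded_atom_cases T G p c : dne_stable T c ->
  ded T (Var p :: G) c -> ded T (Neg (Var p) :: G) c -> ded T G c.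
Proof.
move=> Hdne Hpos Hneg.
impE_with (Neg (Neg c)); first exact: Hdne.
apply: ded_impI; impE_with c; first hyp.
apply: (ded_cut (a := Neg (Var p))).
  apply: ded_impI; impE_with c; first hyp.
  by apply: (ded_weaken Hpos) => g /=; tauto.
by apply: (ded_weaken Hneg) => g /=; tauto.
Qed.

Lemma ded_lits_elim T c ps G : dne_stable T c ->
  (forall v, ded T (lits v ps G) c) -> ded T G c.
Proof.
move=> Hdne; elim: ps => [|p ps IH] Hc; first exact: Hc (fun _ => false).
apply: IH => v; case: (boolP (p \in ps)) => Hp.
  by apply: (ded_weaken (Hc v)) => g /= [<-|]; [apply: lit_in_lits|].
have Hupd b : ded T (lit (fun n => if n == p then b else v n) p :: lits v ps G) c.
  rewrite (@eq_lits v (fun n => if n == p then b else v n)); first exact: Hc.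
  by move=> n Hn; case: eqP Hn Hp => // ->->.
apply: (ded_atom_cases (p := p)) => //.
  by have := Hupd true; rewrite /lit eqxx.
by have := Hupd false; rewrite /lit eqxx.
Qed.

Lemma or_free_complete T h : ipc_theory T -> stable_atoms T -> or_free h -> CPC h -> T h.
Proof.
move=> hT HS Hh Hv; apply: ded_sound_nil hT _.
apply: (@ded_lits_elim _ _ (vars h)) => [|v]; first exact: or_free_dne_stable.
by have := @ded_kalmar T v h _ Hh (fun p => @lit_in_lits v _ [::] p); rewrite Hv.
Qed.

(** * The or-free normal form over ND *)

Lemma subst_comp s t f : subst s (subst t f) = subst (fun n => subst s (t n)) f.
Proof. by elim: f => //= [a -> b ->|a -> b ->|a -> b ->]. Qed.

Lemma subst_bigOr s h l : subst s (bigOr h l) = bigOr (subst s h) (map (subst s) l).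
Proof. by elim: l h => //= y l IH h; rewrite IH. Qed.

Lemma eq_beval v w f : v =1 w -> beval v f = beval w f.
Proof. by move=> Hvw; elim: f => //= [a -> b ->|a -> b ->|a -> b ->]. Qed.

Lemma beval_subst v s f : beval v (subst s f) = beval (fun n => beval v (s n)) f.
Proof. by elim: f => //= [a -> b ->|a -> b ->|a -> b ->]. Qed.

Definition ND_scheme (X Y : form) (qs : seq form) : form :=
  Imp (Imp (Neg X) (bigOr (Neg Y) [seq Neg q | q <- qs]))
      (bigOr (Imp (Neg X) (Neg Y)) [seq Imp (Neg X) (Neg q) | q <- qs]).

Lemma subst_ND_axiom s k :
  subst s (ND_axiom k) = ND_scheme (s 0) (s 1) [seq s i.+1 | i <- iota 1 k.-1].
Proof. by rewrite /ND_axiom /ND_scheme /= !subst_bigOr /= -!map_comp. Qed.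

Lemma ND_scheme_instance X Y qs : exists s k, 0 < k /\ subst s (ND_axiom k) = ND_scheme X Y qs.
Proof.
pose s n := if n is j.+1 then nth Bot (Y :: qs) j else X.
exists s, (size qs).+1; split=> //; rewrite subst_ND_axiom /=; congr ND_scheme.
by rewrite (map_nth_iota Bot) /= ?subn1 // drop0 take_size.
Qed.

Lemma neg_variant_ND_scheme L X Y qs :
  (forall f, ND f -> L f) -> neg_variant L (ND_scheme X Y qs).
Proof.
move=> HL; have [s [k [Hk <-]]] := ND_scheme_instance X Y qs.
by rewrite /neg_variant subst_comp; apply: HL; apply: ax_inst; exists k.
Qed.

Fixpoint imp_dis (xs ys : seq form) : seq form :=
  if xs is x :: xs' then [seq And u r | u <- [seq Imp x y | y <- ys], r <- imp_dis xs' ys]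
  else [:: Top].

Fixpoint disjuncts (f : form) : seq form :=
  match f with
  | And a b => [seq And x y | x <- disjuncts a, y <- disjuncts b]
  | Or a b => disjuncts a ++ disjuncts b
  | Imp a b => imp_dis (disjuncts a) (disjuncts b)
  | _ => [:: f]
  end.

Lemma size_imp_dis_gt0 xs ys : 0 < size ys -> 0 < size (imp_dis xs ys).
Proof. by move=> Hys; elim: xs => //= x xs IH; rewrite size_allpairs size_map muln_gt0 Hys. Qed.

Lemma size_disjuncts_gt0 f : 0 < size (disjuncts f).
Proof.
elim: f => //= [a Ha b Hb|a Ha b Hb|a _ b Hb]; last exact: size_imp_dis_gt0.
  by rewrite size_allpairs muln_gt0 Ha.
by rewrite size_cat addn_gt0 Ha.
Qed.

Lemma imp_dis_or_free xs ys r : (forall x, In x xs -> or_free x) ->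
  (forall y, In y ys -> or_free y) -> In r (imp_dis xs ys) -> or_free r.
Proof.
elim: xs r => [|x xs IH] r /= Hxs Hys; first by case=> // <-.
case/In_allpairs=> [u [r' [/In_map_inv [y Hy ->] Hr' ->]]] /=.
by split; [split; auto | apply: IH => // x' Hx'; auto].
Qed.

Lemma disjuncts_or_free f z : In z (disjuncts f) -> or_free z.
Proof.
elim: f z => [p|||a IHa b IHb|a IHa b IHb|a IHa b IHb] z /=; try by case=> // <-.
- by case/In_allpairs=> [x [y [Hx Hy ->]]] /=; auto.
- by case/In_cat; auto.
- exact: imp_dis_or_free.
Qed.

Definition equiv_dis (T : fset) (f : form) (l : seq form) : Prop :=
  (forall G, ded T G (Imp f (dis l))) /\ (forall z G, In z l -> ded T G (Imp z f)).

Lemma equiv_dis_self T f : equiv_dis T f [:: f].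
Proof.
split=> [G|z G [<-|[]]]; apply: ded_impI; last by hyp.
by apply: ded_orI1; hyp.
Qed.

Lemma equiv_dis_and T a b xs ys : equiv_dis T a xs -> equiv_dis T b ys ->
  equiv_dis T (And a b) [seq And x y | x <- xs, y <- ys].
Proof.
move=> [Ha1 Ha2] [Hb1 Hb2]; split=> [G|z G].
  apply: ded_impI; apply: (ded_disE (l := xs)).
    by impE_with a; [apply: Ha1 | apply: ded_andE1; hyp].
  move=> x Hx; apply: (ded_disE (l := ys)).
    by impE_with b; [apply: Hb1 | apply: ded_andE2; hyp].
  move=> y Hy; apply: (ded_disI (z := And x y)); first by apply/In_allpairs; exists x, y.
  by apply: ded_andI; hyp.
case/In_allpairs=> [x [y [Hx Hy ->]]].
apply: ded_impI; apply: ded_andI.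
  by impE_with x; [apply: Ha2 | apply: ded_andE1; hyp].
by impE_with y; [apply: Hb2 | apply: ded_andE2; hyp].
Qed.

Lemma equiv_dis_or T a b xs ys : equiv_dis T a xs -> equiv_dis T b ys ->
  equiv_dis T (Or a b) (xs ++ ys).
Proof.
move=> [Ha1 Ha2] [Hb1 Hb2]; split=> [G|z G].
  apply: ded_impI; apply: ded_orE; first by hyp.
    apply: (ded_disE (l := xs)); first by impE_with a; [apply: Ha1 | hyp].
    by move=> z Hz; apply: (ded_disI (z := z)); [apply/In_cat; left | hyp].
  apply: (ded_disE (l := ys)); first by impE_with b; [apply: Hb1 | hyp].
  by move=> z Hz; apply: (ded_disI (z := z)); [apply/In_cat; right | hyp].
case/In_cat=> Hz; apply: ded_impI.
  by apply: ded_orI1; impE_with z; [apply: Ha2 | hyp].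
by apply: ded_orI2; impE_with z; [apply: Hb2 | hyp].
Qed.

Lemma ded_imp_disI T G xs ys :
  (forall x, In x xs -> ded T G (dis [seq Imp x y | y <- ys])) -> ded T G (dis (imp_dis xs ys)).
Proof.
elim: xs G => [|x xs IH] G /= Hxs; first by apply: ded_orI1; apply: ded_topI.
apply: (ded_disE (Hxs x (or_introl erefl))) => u Hu.
apply: (ded_disE (IH (u :: G) _)) => [x' Hx'|r Hr].
  by apply: ded_weaken1; apply: Hxs; right.
apply: (ded_disI (z := And u r)); first by apply/In_allpairs; exists u, r.
by apply: ded_andI; hyp.
Qed.

Lemma ded_imp_disE T xs ys r x : In r (imp_dis xs ys) -> In x xs ->
  exists2 y, In y ys & forall G, ded T G (Imp r (Imp x y)).
Proof.
elim: xs r => [|x0 xs IH] r //= /In_allpairs [u [r' [/In_map_inv [y Hy ->] Hr' ->]]] [<-|Hx].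
  by exists y => // G; apply: ded_impI; apply: ded_andE1; hyp.
have [y' Hy' Hr'x] := IH r' Hr' Hx.
exists y' => // G; apply: ded_impI; impE_with r'; first exact: Hr'x.
by apply: ded_andE2; hyp.
Qed.

Section OrFreeNormalForm.

Variable T : fset.
Hypothesis T_stable : stable_atoms T.
Hypothesis T_ND : forall X Y qs, T (ND_scheme X Y qs).

(* [x] and the [z] are ¬¬-stable, so [x -> z] is equivalent to [¬¬x -> ¬¬z]; this
   is what the ND axiom with [¬x, ¬y, ¬z] distributes over the disjunction. *)
Lemma ded_imp_dis G x y ys : or_free x -> (forall z, In z (y :: ys) -> or_free z) ->
  ded T G (Imp x (dis (y :: ys))) -> ded T G (dis [seq Imp x z | z <- y :: ys]).
Proof.
move=> Hx Hys Hxy.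
have HND : ded T G (ND_scheme (Neg x) (Neg y) [seq Neg z | z <- ys]) by apply: ded_thm.
have from_nnz z : In z (y :: ys) ->
    ded T (Imp (Neg (Neg x)) (Neg (Neg z)) :: G) (dis [seq Imp x z | z <- y :: ys]).
  move=> Hz; apply: (ded_disI (z := Imp x z)); first exact: In_map.
  apply: ded_impI; impE_with (Neg (Neg z)); first exact: (or_free_dne_stable T_stable (Hys z Hz) _).
  impE_with (Neg (Neg x)); first hyp.
  by apply: ded_impI; impE_with x; hyp.
apply: (ded_bigOrE (ded_impE HND _)).
- apply: ded_impI; apply: (ded_disE (l := y :: ys)).
    impE_with x; first exact: ded_weaken1.
    by impE_with (Neg (Neg x)); [exact: (or_free_dne_stable T_stable Hx _) | hyp].
  move=> z Hz; apply: (ded_bigOrI (z := Neg (Neg z))).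
    case: Hz => [<-|Hz]; [by left | right].
    by rewrite -map_comp; apply: In_map.
  by apply: ded_impI; impE_with z; hyp.
- move=> w [<-|]; first by apply: from_nnz; left.
  case/In_map_inv=> _ /In_map_inv [z Hz ->] ->.
  by apply: from_nnz; right.
Qed.

Lemma equiv_dis_imp a b xs ys : equiv_dis T a xs -> equiv_dis T b ys ->
  (forall x, In x xs -> or_free x) -> (forall y, In y ys -> or_free y) -> 0 < size ys ->
  equiv_dis T (Imp a b) (imp_dis xs ys).
Proof.
move=> [Ha1 Ha2] [Hb1 Hb2] Hxs; case: ys Hb1 Hb2 => // y ys Hb1 Hb2 Hys _.
split=> [G|z G Hz].
  apply: ded_impI; apply: ded_imp_disI => x Hx.
  apply: ded_imp_dis; [exact: Hxs | exact: Hys |].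
  apply: ded_impI; impE_with b; first exact: Hb1.
  impE_with a; first hyp.
  by impE_with x; [apply: Ha2 | hyp].
apply: ded_impI; apply: ded_impI.
apply: (ded_disE (l := xs)); first by impE_with a; [apply: Ha1 | hyp].
move=> x Hx; have [y' Hy' Hzxy] := ded_imp_disE T Hz Hx.
impE_with y'; first exact: Hb2.
impE_with x; last by hyp.
by impE_with z; [apply: Hzxy | hyp].
Qed.

Lemma equiv_dis_disjuncts f : equiv_dis T f (disjuncts f).
Proof.
elim: f => [p|||a IHa b IHb|a IHa b IHb|a IHa b IHb]; try exact: equiv_dis_self.
- exact: equiv_dis_and.
- exact: equiv_dis_or.
- apply: equiv_dis_imp => //; [exact: disjuncts_or_free | exact: disjuncts_or_free |].
  exact: size_disjuncts_gt0.
Qed.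

End OrFreeNormalForm.

(** * Negative variants of extensions of ND *)

(* Prucnal's substitution: the identity under [g], the valuation [e] under [¬g]. *)
Definition prucnal (g : form) (e : nat -> bool) : substitution :=
  fun p => And (Imp g (Var p)) (Imp (Neg g) (if e p then Top else Bot)).

Lemma or_free_prucnal g e p : or_free g -> or_free (prucnal g e p).
Proof. by rewrite /prucnal; case: (e p). Qed.

Lemma CPC_prucnal g e : beval e g -> CPC (subst (prucnal g e) g).
Proof.
move=> He v; rewrite beval_subst /prucnal /=.
case Hv: (beval v g).
  by rewrite -Hv; apply: eq_beval => p /=; rewrite Hv andbT.
by rewrite -He; apply: eq_beval => p /=; case: (e p).
Qed.

Lemma ded_prucnal T g e f : ded T [:: g] (Imp (subst (prucnal g e) f) f).
Proof.
apply: (proj1 (ded_subst_equiv _ _ _)) => p; rewrite /prucnal; apply: ded_impI.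
  by impE_with g; [apply: ded_andE1 | ]; hyp.
apply: ded_andI; apply: ded_impI; first by hyp.
by apply: ded_botE; impE_with g; hyp.
Qed.

Lemma neg_variant_IPC_stable L b :
  (forall f, IPC f -> L f) -> dne_stable IPC (subst neg_sub b) ->
  neg_variant L (Iff b (Neg (Neg b))).
Proof.
by move=> HL Hb; apply: HL; apply: (@ded_sound_nil IPC) ipc_theory_IPC _; apply: ded_iff_dne.
Qed.

Lemma neg_variant_stable_atoms L : (forall f, IPC f -> L f) -> stable_atoms (neg_variant L).
Proof. by move=> HL p; apply: neg_variant_IPC_stable; last exact: dne_stable_Imp (dne_stable_Bot _). Qed.

Lemma prucnal_stable L g e :
  (forall f, IPC f -> L f) -> stable_in (neg_variant L) (prucnal g e).
Proof.
move=> HL p; apply: neg_variant_IPC_stable => //=.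
apply: dne_stable_And; apply: dne_stable_Imp; first exact: dne_stable_Imp (dne_stable_Bot _).
by case: (e p); [apply: dne_stable_Top | apply: dne_stable_Bot].
Qed.

Lemma derives_single_thm T a b : ipc_theory T -> derives T (single a) b -> T a -> T b.
Proof. by case=> _ Hmp Hab Ha; elim: Hab => // [f ->|f g _ Hfg _ Hf] //; apply: Hmp Hfg Hf. Qed.

Lemma derives_of_imp T a b : T (Imp a b) -> derives T (single a) b.
Proof. by move=> Hab; apply: der_mp (der_thm _ Hab) (der_hyp _ _). Qed.

Section NegativeVariant.

Variable L : fset.
Hypothesis L_ND : forall f, ND f -> L f.

Let L_IPC f : IPC f -> L f.
Proof. by move=> Hf; apply: L_ND; apply: ax_ipc. Qed.

Variable T : fset.
Hypothesis T_theory : intermediate_theory T.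
Hypothesis T_ext : forall f, neg_variant L f -> T f.
Hypothesis T_closed : closed_under T (stable_in (neg_variant L)).

Let T_ipc : ipc_theory T := intermediate_ipc_theory T_theory.

Let T_stable_atoms : stable_atoms T.
Proof. by move=> p; apply: T_ext; apply: neg_variant_stable_atoms L_IPC p. Qed.

Let T_ND_scheme X Y qs : T (ND_scheme X Y qs).
Proof. by apply: T_ext; apply: neg_variant_ND_scheme. Qed.

Lemma or_free_imp_transfer g a b : or_free g ->
  (forall s, stable_in (neg_variant L) s -> T (subst s a) -> T (subst s b)) ->
  T (Imp g a) -> T (Imp g b).
Proof.
move=> Hg Hab Hga.
have [[e He]|Hunsat] := classic (exists e, beval e g).
- pose s := prucnal g e.
  have Hs : stable_in (neg_variant L) s by apply: prucnal_stable L_IPC.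
  have Hsg : T (subst s g).
    apply: or_free_complete T_ipc T_stable_atoms _ (CPC_prucnal He).
    by apply: or_free_subst => // p; apply: or_free_prucnal.
  have Hsa : T (subst s a).
    by apply: derives_single_thm T_ipc _ Hsg; apply: T_closed Hs _ _ _; apply: derives_of_imp.
  apply: ded_sound_nil T_ipc _; apply: ded_impI.
  by impE_with (subst s b); [apply: ded_prucnal | apply: ded_thm; apply: Hab].
- have Hng : T (Neg g).
    apply: or_free_complete T_ipc T_stable_atoms _ _ => // v /=.
    by case Hv: (beval v g) => //; case: Hunsat; exists v.
  apply: ded_sound_nil T_ipc _; apply: ded_impI; apply: ded_botE.
  by impE_with g; [apply: ded_thm | hyp].
Qed.

Lemma neg_variant_ext_structurally_complete : structurally_complete T (stable_in (neg_variant L)).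
Proof.
move=> a b Hab; apply: derives_of_imp.
have [Ha_dis Hdis_a] := equiv_dis_disjuncts T_stable_atoms T_ND_scheme a.
apply: ded_sound_nil T_ipc _; apply: ded_impI.
apply: (ded_disE (l := disjuncts a)); first by impE_with a; [apply: Ha_dis | hyp].
move=> g Hg; impE_with g; last by hyp.
apply: ded_thm; apply: (or_free_imp_transfer (disjuncts_or_free Hg) Hab).
exact: ded_sound_nil T_ipc (Hdis_a g [::] Hg).
Qed.

End NegativeVariant.

Lemma hereditarily_structurally_complete_neg_variant L : (forall f, ND f -> L f) ->
  hereditarily_structurally_complete (neg_variant L) (stable_in (neg_variant L)).
Proof. by move=> HL T hT HLT Hcl; apply: neg_variant_ext_structurally_complete. Qed.

(** * Kreisel-Putnam and Medvedev logics *)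

Lemma ded_KP_ND_scheme X Y qs G : ded KP G (ND_scheme X Y qs).
Proof.
elim: qs Y G => [|q qs IH] Y G; rewrite /ND_scheme /=; first by apply: ded_impI; hyp.
set Q := bigOr (Neg q) [seq Neg z | z <- qs].
pose s n := match n with 0 => X | 1 => Neg Y | _ => Q end.
have HKP : KP (subst s KP_axiom) by apply: ax_inst.
apply: ded_impI; apply: ded_orE.
- by impE_with (Imp (Neg X) (Or (Neg Y) Q)); [apply: ded_thm; exact: HKP | hyp].
- by apply: ded_orI1; hyp.
- by apply: ded_orI2; impE_with (Imp (Neg X) Q); [apply: IH | hyp].
Qed.

Lemma ND_sub_KP f : ND f -> KP f.
Proof.
elim=> [g Hg|s g [k [_ ->]]|a b _ Hab _ Ha].
- exact: ax_ipc.
- rewrite subst_ND_axiom; apply: ded_sound_nil (ded_KP_ND_scheme _ _ _ _).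
  by split; [apply: ax_ipc | apply: ax_mp].
- exact: ax_mp Hab Ha.
Qed.

Section MedvedevFrames.

Variables (n : nat) (V : nat -> {set 'I_n} -> Prop).
Hypothesis V_persistent : persistent V.

Lemma mforces_persistent f (x y : {set 'I_n}) : x != set0 -> y != set0 -> y \subset x ->
  mforces V x f -> mforces V y f.
Proof.
elim: f x y => [p|||a IHa b IHb|a IHa b IHb|a IHa b IHb] x y Hx Hy Hyx //=.
- exact: V_persistent.
- by case=> Ha Hb; split; [apply: IHa Hyx Ha | apply: IHb Hyx Hb].
- by case=> [Ha|Hb]; [left; apply: IHa Hyx Ha | right; apply: IHb Hyx Hb].
- by move=> Hab z Hz Hzy; apply: Hab Hz _; apply: subset_trans Hzy Hyx.
Qed.

Lemma mforces_IPC f x : IPC f -> x != set0 -> mforces V x f.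
Proof.
move=> Hf; elim: Hf x => {f} /=.
- move=> a b x _ y Hy _ Ha z Hz Hzy _; exact: mforces_persistent Hy Hz Hzy Ha.
- move=> a b c x _ y Hy Hyx Habc z Hz Hzy Hab w Hw Hwz Ha.
  exact: (Habc w Hw (subset_trans Hwz Hzy) Ha w Hw (subxx w) (Hab w Hw Hwz Ha)).
- by move=> a b x _ y _ _ [].
- by move=> a b x _ y _ _ [].
- move=> a b x _ y Hy _ Ha z Hz Hzy Hb; split=> //; exact: mforces_persistent Hy Hz Hzy Ha.
- by move=> a b x _ y _ _ Ha; left.
- by move=> a b x _ y _ _ Hb; right.
- move=> a b c x _ y _ Hyx Hac z Hz Hzy Hbc w Hw Hwz [Ha|Hb].
    exact: Hac w Hw (subset_trans Hwz Hzy) Ha.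
  exact: Hbc w Hw Hwz Hb.
- by move=> a x _ y _ _ [].
- by [].
- by move=> a b _ Hab _ Ha x Hx; apply: (Hab x Hx x Hx (subxx x) (Ha x Hx)).
Qed.

Lemma mforces_bigOr x h l :
  mforces V x (bigOr h l) <-> exists2 z, In z (h :: l) & mforces V x z.
Proof.
elim: l h => [|y l IH] h /=.
  by split=> [Hh|[z [<-|[]] Hz]] //; exists h; auto.
rewrite IH; split.
- by case=> [Hh|[z Hz Hxz]]; [exists h | exists z]; auto.
- by case=> z [<-|Hz] Hxz; [left | right; exists z].
Qed.

Definition asbool (P : Prop) : bool := if excluded_middle_informative P then true else false.

Lemma asboolP P : reflect P (asbool P).
Proof. by rewrite /asbool; case: excluded_middle_informative => HP; constructor. Qed.

(* The points [i] of [y] with [{i}] forcing [¬X] form the largest nonempty [S ⊆ y]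
   forcing [¬X], if there is one; a disjunct [¬q] forced at [S] then gives [¬X -> ¬q]
   at [y]. *)
Lemma mforces_ND_scheme X Y qs x : mforces V x (ND_scheme X Y qs).
Proof.
move=> y Hy _ Hyq.
pose S := [set i in y | asbool (mforces V [set i] (Neg X))].
have S_max z : z != set0 -> z \subset y -> mforces V z (Neg X) -> z \subset S.
  move=> Hz Hzy HzX; apply/subsetP => i Hi; rewrite inE (subsetP Hzy) //=.
  apply/asboolP; apply: mforces_persistent Hz _ _ HzX; last by rewrite sub1set.
  by apply/set0Pn; exists i; rewrite inE.
have Sy : S \subset y by apply/subsetP => i; rewrite inE => /andP[].
have S_negX : S != set0 -> mforces V S (Neg X).
  move=> HS z Hz HzS HzX; have [i Hi] := set0Pn _ Hz.
  have Hi1 : [set i] != set0 by apply/set0Pn; exists i; rewrite inE.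
  have HiX : mforces V [set i] X by apply: mforces_persistent Hz Hi1 _ HzX; rewrite sub1set.
  have := subsetP HzS i Hi; rewrite inE => /andP [_ /asboolP HinegX].
  exact: HinegX [set i] Hi1 (subxx _) HiX.
case: (boolP (S == set0)) => HS.
  apply/mforces_bigOr; exists (Imp (Neg X) (Neg Y)); first by left.
  move=> z Hz Hzy HzX; have := S_max z Hz Hzy HzX.
  by rewrite (eqP HS) subset0 (negbTE Hz).
have [_ [<-|/In_map_inv [q Hq ->]] HSq] := proj1 (mforces_bigOr _ _ _) (Hyq S HS Sy (S_negX HS)).
  apply/mforces_bigOr; exists (Imp (Neg X) (Neg Y)); first by left.
  by move=> z Hz Hzy HzX; apply: mforces_persistent HS Hz (S_max z Hz Hzy HzX) HSq.
apply/mforces_bigOr; exists (Imp (Neg X) (Neg q)); first by right; apply: In_map.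
by move=> z Hz Hzy HzX; apply: mforces_persistent HS Hz (S_max z Hz Hzy HzX) HSq.
Qed.

End MedvedevFrames.

Lemma ND_sub_ML f : ND f -> ML f.
Proof.
elim=> [g Hg|s g [k [_ ->]]|a b _ Hab _ Ha] n V HV x Hx.
- exact: mforces_IPC.
- by rewrite subst_ND_axiom; apply: mforces_ND_scheme.
- exact: (Hab n V HV x Hx x Hx (subxx x) (Ha n V HV x Hx)).
Qed.

Theorem theorem5p5 :
  (forall L : fset, intermediate_logic L -> (forall f, ND f -> L f) ->
     hereditarily_structurally_complete (neg_variant L) (stable_in (neg_variant L))) /\
  hereditarily_structurally_complete (neg_variant ND) (stable_in (neg_variant ND)) /\
  hereditarily_structurally_complete (neg_variant KP) (stable_in (neg_variant KP)) /\
  hereditarily_structurally_complete (neg_variant ML) (stable_in (neg_variant ML)).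
Proof.
split; first by move=> L _; apply: hereditarily_structurally_complete_neg_variant.
split; first exact: hereditarily_structurally_complete_neg_variant.
by split; apply: hereditarily_structurally_complete_neg_variant; [apply: ND_sub_KP | apply: ND_sub_ML].
Qed.
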